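(* Consider the causal directed acyclic graph $G_a$ on the variables $X, D, S, Y, K_D, K_S$ whose edges are exactly $X \to D$, $D \to Y$, $X \to S$, $S \to Y$, $K_D \to X$, $K_D \to Y$, $K_S \to X$, $K_S \to Y$, and suppose that only $X$, $D$ and $Y$ are observed (i.e. $S$, $K_D$, $K_S$ are unobserved). Then the interventional distribution $P(y \mid do(x))$ is not identifiable from the joint distribution of the observed variables $(X, D, Y)$.
   Context: A causal model over a DAG: each variable is generated from its parents in the graph and independent exogenous noise; $P(y \mid do(x))$ denotes the distribution of $Y$ after setting $X = x$ by intervention (removing all edges into $X$). ''Identifiable'' means that $P(y\mid do(x))$ is uniquely determined by the joint distribution of the observed variables for every causal model compatible with the graph (with strictly positive observational distribution). Interpretation in the paper: $X$ is a blurry image, $D$ a pixel-level feature, $S$ a semantic-level feature, $Y$ the restored image, and $K_D$, $K_S$ the complete pixel-level and semantic-level knowledge contained in $X$. *)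

From HB Require Import structures.
From mathcomp Require Import all_boot all_order all_algebra.
From mathcomp Require Import reals.
Set Implicit Arguments. Unset Strict Implicit. Unset Printing Implicit Defensive.
Import Order.TTheory GRing.Theory Num.Theory.
Local Open Scope ring_scope.

Definition is_pmf (R : numDomainType) (U : finType) (p : U -> R) : Prop :=
  (forall u, 0 <= p u) /\ \sum_(u : U) p u = 1.

(* A (discrete, finite-valued) structural causal model compatible with the
   DAG G_a: edges X->D, D->Y, X->S, S->Y, K_D->X, K_D->Y, K_S->X, K_S->Y.
   Each variable is a function of its parents and of its own exogenous
   noise; the six noises are mutually independent with pmfs pV.
   The observed variables X, D, Y have value types TX, TD, TY; the latent
   variables S, K_D, K_S have value types given by the model. *)
Record scm (R : realType) (TX TD TY : finType) := SCM {
  TS : finType; TKD : finType; TKS : finType;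
  UX : finType; UD : finType; US : finType; UY : finType;
  UKD : finType; UKS : finType;
  pX : UX -> R; pD : UD -> R; pS : US -> R; pY : UY -> R;
  pKD : UKD -> R; pKS : UKS -> R;
  pX_pmf : is_pmf pX; pD_pmf : is_pmf pD; pS_pmf : is_pmf pS;
  pY_pmf : is_pmf pY; pKD_pmf : is_pmf pKD; pKS_pmf : is_pmf pKS;
  fKD : UKD -> TKD;
  fKS : UKS -> TKS;
  fX : TKD -> TKS -> UX -> TX;
  fD : TX -> UD -> TD;
  fS : TX -> US -> TS;
  fY : TD -> TS -> TKD -> TKS -> UY -> TY
}.

Arguments TS {R TX TD TY} s.
Arguments TKD {R TX TD TY} s.
Arguments TKS {R TX TD TY} s.
Arguments UX {R TX TD TY} s.
Arguments UD {R TX TD TY} s.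
Arguments US {R TX TD TY} s.
Arguments UY {R TX TD TY} s.
Arguments UKD {R TX TD TY} s.
Arguments UKS {R TX TD TY} s.
Arguments pX {R TX TD TY} s.
Arguments pD {R TX TD TY} s.
Arguments pS {R TX TD TY} s.
Arguments pY {R TX TD TY} s.
Arguments pKD {R TX TD TY} s.
Arguments pKS {R TX TD TY} s.
Arguments pX_pmf {R TX TD TY} s.
Arguments pD_pmf {R TX TD TY} s.
Arguments pS_pmf {R TX TD TY} s.
Arguments pY_pmf {R TX TD TY} s.
Arguments pKD_pmf {R TX TD TY} s.
Arguments pKS_pmf {R TX TD TY} s.
Arguments fKD {R TX TD TY} s.
Arguments fKS {R TX TD TY} s.
Arguments fX {R TX TD TY} s.
Arguments fD {R TX TD TY} s.
Arguments fS {R TX TD TY} s.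
Arguments fY {R TX TD TY} s.

Definition obs_prob (R : realType) (TX TD TY : finType) (M : scm R TX TD TY)
  (x : TX) (d : TD) (y : TY) : R :=
  \sum_(ukd : UKD M) \sum_(uks : UKS M) \sum_(ux : UX M)
  \sum_(ud : UD M) \sum_(us : US M) \sum_(uy : UY M)
    (pKD M ukd * pKS M uks * pX M ux * pD M ud * pS M us * pY M uy) *
    (let kd := fKD M ukd in let ks := fKS M uks in
     let vx := fX M kd ks ux in
     let vd := fD M vx ud in let vs := fS M vx us in
     let vy := fY M vd vs kd ks uy in
     ((vx == x) && (vd == d) && (vy == y))%:R).

(* Interventional distribution P(Y = y | do(X = x)): the mechanism of X is
   replaced by the constant x (all edges into X removed). *)
Definition do_prob (R : realType) (TX TD TY : finType) (M : scm R TX TD TY)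
  (x : TX) (y : TY) : R :=
  \sum_(ukd : UKD M) \sum_(uks : UKS M) \sum_(ux : UX M)
  \sum_(ud : UD M) \sum_(us : US M) \sum_(uy : UY M)
    (pKD M ukd * pKS M uks * pX M ux * pD M ud * pS M us * pY M uy) *
    (let kd := fKD M ukd in let ks := fKS M uks in
     let vd := fD M x ud in let vs := fS M x us in
     let vy := fY M vd vs kd ks uy in
     (vy == y)%:R).

From HB Require Import structures.
From mathcomp Require Import all_boot all_order all_algebra.
From mathcomp Require Import reals.
From mathcomp Require Import lra.
Import Order.TTheory GRing.Theory Num.Theory.
Local Open Scope ring_scope.

(* Two models compatible with G_a, both with a constant D.  In the first, X
   is a fair coin and Y an independent r-coin.  In the second, a fair latent
   coin K_D masks an r-coin U as X = K_D (+) U, and Y undoes the mask through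
   S = X: Y = S (+) K_D = U.  Both give P(x, d, y) = P_r(y) / 2, but under
   do(X = x) the second model yields Y = x (+) K_D, a fair coin, whereas the
   first still yields an r-coin. *)

Lemma big_unit (T : Type) (idx : T) (op : Monoid.law idx) (F : unit -> T) :
  \big[op/idx]_(u : unit) F u = F tt.
Proof. by rewrite (big_pred1 tt) // => -[]. Qed.

Section Counterexample.
Context {R : realType}.

Definition bernoulli_pmf (r : R) (b : bool) : R := if b then r else 1 - r.

Lemma bernoulli_pmf_is_pmf {r : R} : 0 <= r <= 1 -> is_pmf (bernoulli_pmf r).
Proof.
move=> /andP[r_ge0 r_le1]; split; first by case; rewrite /bernoulli_pmf; lra.
by rewrite big_bool /bernoulli_pmf /=; lra.
Qed.

Lemma fair_coin_is_pmf : is_pmf (bernoulli_pmf (1 / 2)).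
Proof. by apply: bernoulli_pmf_is_pmf; apply/andP; lra. Qed.

Definition unit_pmf (u : unit) : R := 1.

Lemma unit_pmf_is_pmf : is_pmf unit_pmf.
Proof. by split=> [//|]; rewrite big_unit. Qed.

Context {r : R} (r_in01 : 0 <= r <= 1).

Definition unconfounded_scm : scm R bool unit bool := {|
  TS := unit; TKD := unit; TKS := unit;
  UX := bool; UD := unit; US := unit; UY := bool; UKD := unit; UKS := unit;
  pX_pmf := fair_coin_is_pmf; pD_pmf := unit_pmf_is_pmf;
  pS_pmf := unit_pmf_is_pmf; pY_pmf := bernoulli_pmf_is_pmf r_in01;
  pKD_pmf := unit_pmf_is_pmf; pKS_pmf := unit_pmf_is_pmf;
  fKD := id; fKS := id;
  fX := fun _ _ ux => ux;
  fD := fun _ _ => tt;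
  fS := fun _ _ => tt;
  fY := fun _ _ _ _ uy => uy |}.

Definition masked_scm : scm R bool unit bool := {|
  TS := bool; TKD := bool; TKS := unit;
  UX := bool; UD := unit; US := unit; UY := unit; UKD := bool; UKS := unit;
  pX_pmf := bernoulli_pmf_is_pmf r_in01; pD_pmf := unit_pmf_is_pmf;
  pS_pmf := unit_pmf_is_pmf; pY_pmf := unit_pmf_is_pmf;
  pKD_pmf := fair_coin_is_pmf; pKS_pmf := unit_pmf_is_pmf;
  fKD := id; fKS := id;
  fX := fun kd _ ux => kd (+) ux;
  fD := fun _ _ => tt;
  fS := fun x _ => x;
  fY := fun _ s kd _ _ => s (+) kd |}.

Ltac eval_sums :=
  rewrite /obs_prob /do_prob /=; do ![rewrite big_unit /= | rewrite big_bool /=];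
  rewrite /bernoulli_pmf /unit_pmf /=.

Lemma obs_prob_unconfounded x d y :
  obs_prob unconfounded_scm x d y = bernoulli_pmf r y / 2.
Proof. by case: x d y => [] [] []; eval_sums; lra. Qed.

Lemma obs_prob_masked x d y :
  obs_prob masked_scm x d y = bernoulli_pmf r y / 2.
Proof. by case: x d y => [] [] []; eval_sums; lra. Qed.

Lemma do_prob_unconfounded x y :
  do_prob unconfounded_scm x y = bernoulli_pmf r y.
Proof. by case: x y => [] []; eval_sums; lra. Qed.

Lemma do_prob_masked x y : do_prob masked_scm x y = 1 / 2.
Proof. by case: x y => [] []; eval_sums; lra. Qed.

End Counterexample.

Theorem mainTheorem1 (R : realType) :
  exists (TX TD TY : finType) (M1 M2 : scm R TX TD TY),
    (forall x d y, 0 < obs_prob M1 x d y) /\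
    (forall x d y, 0 < obs_prob M2 x d y) /\
    (forall x d y, obs_prob M1 x d y = obs_prob M2 x d y) /\
    exists (x : TX) (y : TY), do_prob M1 x y <> do_prob M2 x y.
Proof.
have r_in01 : 0 <= (1 / 4 : R) <= 1 by apply/andP; lra.
have coin_pos y : 0 < bernoulli_pmf (1 / 4 : R) y / 2.
  by case: y; rewrite /bernoulli_pmf; lra.
exists bool, unit, bool, (unconfounded_scm r_in01), (masked_scm r_in01).
split; [|split; [|split]] => [x d y|x d y|x d y|].
- by rewrite obs_prob_unconfounded.
- by rewrite obs_prob_masked.
- by rewrite obs_prob_unconfounded obs_prob_masked.
- by exists true, true; rewrite do_prob_unconfounded do_prob_masked /=; lra.
Qed.
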